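(* Let $(x_i)_{i\in[n]}$ be i.i.d. Bernoulli random variables conditioned on the event $\sum_{i\in[n]}x_i=S$. Let $A,B_1,\dots,B_k$ partition $[n]$, and set $X=(x_i)_{i\in A}$, $Y_j=(x_i)_{i\in B_j}$, $Z_j=\sum_{i\in B_j}x_i$ for $1\le j\le k$. Let $f$ be a real-valued function and $\varphi(t)=\mathbb{E}\,e^{itf(X,Y_1,\dots,Y_k)}$. Then \[|\varphi(t)|^{2^k}\le\mathbb{E}_{Z_1,\dots,Z_k,Y_1^0,Y_1^1,\dots,Y_k^0,Y_k^1}\Big|\mathbb{E}_X\big[e^{it\alpha(f)(X,\mathbf{Y})}\,\big|\,Z_1,\dots,Z_k\big]\Big|,\] where $(Z_1,\dots,Z_k)$ has the distribution induced by the conditioned model, and given $Z_1,\dots,Z_k$ the vectors $Y_j^\ell$ ($1\le j\le k$, $\ell\in\{0,1\}$) are conditionally independent, each $Y_j^\ell$ uniform among $\{0,1\}$-vectors indexed by $B_j$ with exactly $Z_j$ ones, and the inner expectation is over $X$ with its conditional distribution given $Z_1,\dots,Z_k$.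
   Context: For $f(X,Y_1,\dots,Y_k)$, the decoupling operator $\alpha$ is $\alpha(f)(X,Y_1^0,Y_1^1,\dots,Y_k^0,Y_k^1)=\sum_{\mathbf{v}\in\{0,1\}^k}(-1)^{|\mathbf{v}|}f(X,Y_1^{v_1},\dots,Y_k^{v_k})$, and $\mathbf{Y}=(Y_1^0,Y_1^1,\dots,Y_k^0,Y_k^1)$. *)

From HB Require Import structures.
From mathcomp Require Import all_boot all_order all_algebra.
From mathcomp Require Import all_classical all_reals.
From mathcomp Require Import trigo.
From mathcomp.real_closed Require Import complex.
Set Implicit Arguments. Unset Strict Implicit. Unset Printing Implicit Defensive.
Import Order.TTheory GRing.Theory Num.Theory.
Local Open Scope ring_scope.
Local Open Scope complex_scope.

Section Lemma211Defs.
Variables (R : realType) (n k : nat).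

Definition config := {ffun 'I_n -> bool}.

Definition ones (x : config) : nat := #|[set i | x i]|.

Definition ones_in (P : pred 'I_n) (x : config) : nat := #|[set i | P i && x i]|.

Definition bern_slice_weight (p : R) (S : nat) (x : config) : R :=
  if ones x == S then p ^+ ones x * (1 - p) ^+ (n - ones x) else 0.

Definition cond_bern (p : R) (S : nat) (x : config) : R :=
  bern_slice_weight p S x / \sum_(x' : config) bern_slice_weight p S x'.

(* The partition: part i = ord0 means i \in A, part i = lift ord0 j means i \in B_j. *)
Variable part : 'I_n -> 'I_k.+1.

Definition inA (i : 'I_n) : bool := part i == ord0.
Definition inB (j : 'I_k) (i : 'I_n) : bool := part i == lift ord0 j.

Definition Zof (x : config) : {ffun 'I_k -> nat} := [ffun j => ones_in (inB j) x].

(* The configuration (X, Y_1^{v_1}, ..., Y_k^{v_k}): coordinates in A taken from x,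
   coordinates in B_j taken from y1 if v_j = 1 and from y0 if v_j = 0. *)
Definition mix (x y0 y1 : config) (v : {ffun 'I_k -> bool}) : config :=
  [ffun i => match unlift ord0 (part i) with
             | None => x i
             | Some j => if v j then y1 i else y0 i end].

(* The decoupling operator alpha, for f a function of (X, Y_1, ..., Y_k)
   (encoded as a function of the full configuration). *)
Definition alpha (f : config -> R) (x y0 y1 : config) : R :=
  \sum_(v : {ffun 'I_k -> bool}) (-1) ^+ #|[set j | v j]| * f (mix x y0 y1 v).

Definition cis (theta : R) : R[i] := (cos theta +i* sin theta)%C.

Definition charfun (p : R) (S : nat) (f : config -> R) (t : R) : R[i] :=
  \sum_(x : config) (cond_bern p S x)%:C * cis (t * f x).

(* Support of (Y_1, ..., Y_k) given Z = z: vectors on the B-blocks (encoded as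
   configurations vanishing on A) with exactly z_j ones in B_j. *)
Definition Yslice (z : {ffun 'I_k -> nat}) : {set config} :=
  [set y : config | [forall i, inA i ==> ~~ y i] && [forall j, ones_in (inB j) y == z j]].

(* Joint law of (Y_1^l, ..., Y_k^l) given Z = z: independent, each Y_j^l uniform
   among {0,1}-vectors on B_j with z_j ones. *)
Definition Ylaw (z : {ffun 'I_k -> nat}) (y : config) : R :=
  if y \in Yslice z then #|Yslice z|%:R^-1 else 0.

Definition PZ (p : R) (S : nat) (z : {ffun 'I_k -> nat}) : R :=
  \sum_(x : config | Zof x == z) cond_bern p S x.

(* E_X[ e^{i t alpha(f)(X, Y)} | Z = z ], X having its conditional law given Z = z.
   (alpha f x y0 y1 only depends on the A-coordinates x, i.e. on X.) *)
Definition condE_X (p : R) (S : nat) (f : config -> R) (t : R)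
    (z : {ffun 'I_k -> nat}) (y0 y1 : config) : R[i] :=
  (\sum_(x : config | Zof x == z) (cond_bern p S x)%:C * cis (t * alpha f x y0 y1))
    / (PZ p S z)%:C.

(* E_{Z, Y^0, Y^1} | E_X [ e^{i t alpha(f)(X,Y)} | Z ] |, Z distributed as in the
   conditioned model (expectation of a function of Z = Zof x). *)
Definition decoupled_bound (p : R) (S : nat) (f : config -> R) (t : R) : R :=
  \sum_(x : config) cond_bern p S x *
    (\sum_(y0 : config) \sum_(y1 : config)
        Ylaw (Zof x) y0 * Ylaw (Zof x) y1 *
        Normc.normc (condE_X p S f t (Zof x) y0 y1)).

End Lemma211Defs.

(* Conditioned on its sum the Bernoulli vector is uniform on the slice
   {x | ones x = S}, and conditioned further on Z = z it is uniform on the fibre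
   of z in the slice.  So |phi(t)| is at most the slice average of
   |E[e^{itf} | Z]|, and by Jensen it suffices to bound
   |E[e^{itf} | Z = z]|^(2^k) for each z.
   Replacing the block B_m of a point of the fibre by the B_m-block of any
   u in Yslice z stays in the fibre, and swapping these blocks between x and u
   is an involution, so averaging over such resamplings changes no average.
   Resampling B_m and applying Cauchy-Schwarz in X turns
   |E_X e^{itg(X)}|^2 into E_{U0,U1} |E_X e^{it(g(X[m:=U0]) - g(X[m:=U1]))}|:
   one van der Corput step squares the exponent and decouples block m.
   After k steps f has become alpha(f). *)

From mathcomp Require Import all_boot all_order all_algebra.
From mathcomp Require Import reals trigo.
From mathcomp Require Import ring.
From mathcomp.real_closed Require Import complex.
Set Implicit Arguments. Unset Strict Implicit. Unset Printing Implicit Defensive.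
Import Order.TTheory GRing.Theory Num.Theory.
Local Open Scope ring_scope.

Section Average.
Variable F : numFieldType.

Definition avg (T : finType) (A : {set T}) (g : T -> F) : F :=
  #|A|%:R^-1 * \sum_(x in A) g x.

Lemma sum_mul_indicator (T : finType) (A : {set T}) (P : pred T) (w g : T -> F)
    (c : F) :
  (forall x, w x = if x \in A then c else 0) ->
  \sum_(x | P x) w x * g x = c * \sum_(x in A | P x) g x.
Proof.
move=> wE; rewrite big_distrr [RHS]big_mkcond [LHS]big_mkcond /=.
by apply: eq_bigr => x _; rewrite wE; case: (P x); case: (x \in A); rewrite ?mul0r.
Qed.

Lemma eq_avg (T : finType) (A : {set T}) (g h : T -> F) :
  {in A, g =1 h} -> avg A g = avg A h.
Proof. by move=> e; rewrite /avg (eq_bigr h) // => x /e. Qed.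

Lemma avg_const (T : finType) (A : {set T}) (c : F) :
  (#|A| > 0)%N -> avg A (fun=> c) = c.
Proof.
move=> A_gt0; rewrite /avg sumr_const -[c *+ _]mulr_natr mulrCA mulVf ?mulr1 //.
by rewrite pnatr_eq0 -lt0n.
Qed.

Lemma avgB (T : finType) (A : {set T}) (g h : T -> F) :
  avg A (fun x => g x - h x) = avg A g - avg A h.
Proof. by rewrite /avg big_split /= sumrN mulrBr. Qed.

Lemma avgMl (T : finType) (A : {set T}) (c : F) (g : T -> F) :
  avg A (fun x => c * g x) = c * avg A g.
Proof. by rewrite /avg -big_distrr /= mulrCA. Qed.

Lemma avgMr (T : finType) (A : {set T}) (c : F) (g : T -> F) :
  avg A (fun x => g x * c) = avg A g * c.
Proof. by rewrite /avg -big_distrl /= mulrA. Qed.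

Lemma exchange_avg (T1 T2 : finType) (A : {set T1}) (B : {set T2})
    (g : T1 -> T2 -> F) :
  avg A (fun a => avg B (g a)) = avg B (fun b => avg A (g^~ b)).
Proof. by rewrite /avg -!big_distrr /= exchange_big mulrCA. Qed.

Lemma avg_fibres (T : finType) (K : eqType) (A : {set T}) (key : T -> K)
    (g : T -> F) :
  avg A (fun x => avg [set y in A | key y == key x] g) = avg A g.
Proof.
pose fib x := [set y in A | key y == key x].
have fibE x y : key y == key x -> fib x = fib y.
  by move=> /eqP e; apply/setP => z; rewrite !inE e.
have fib_gt0 y : y \in A -> (#|fib y| > 0)%N.
  by move=> yA; apply/card_gt0P; exists y; rewrite !inE yA eqxx.
rewrite /avg; congr (_ * _).
transitivity (\sum_(x in A) \sum_(y | (y \in A) && (key y == key x))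
               #|fib y|%:R^-1 * g y).
  apply: eq_bigr => x _; rewrite big_distrr /=.
  apply: eq_big => [y|y]; first by rewrite inE.
  by rewrite inE => /andP[_ e]; rewrite -/(fib x) (fibE x y e).
rewrite (exchange_big_dep (mem A)) /=; last by move=> x y _ /andP[].
apply: eq_bigr => y yA.
rewrite (eq_bigl (mem (fib y))); last by move=> x; rewrite !inE yA eq_sym.
by rewrite sumr_const -mulrnAl -[_ *+ _]mulr_natr mulVf ?mul1r // pnatr_eq0 -lt0n fib_gt0.
Qed.

Lemma avg_resample (T : finType) (A B : {set T}) (r : T -> T -> T) (g : T -> F) :
  (forall x u, r (r x u) (r u x) = x) ->
  (forall x u, x \in A -> u \in B -> (r x u \in A) && (r u x \in B)) ->
  (#|B| > 0)%N ->
  avg A (fun x => avg B (fun u => g (r x u))) = avg A g.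
Proof.
move=> rK rAB B_gt0.
have swap_sum : \sum_(x in A) \sum_(u in B) g (r x u) = \sum_(x in A) \sum_(u in B) g x.
  rewrite !pair_big_dep /=.
  pose sw (xu : T * T) := (r xu.1 xu.2, r xu.2 xu.1).
  have swK : involutive sw by case=> x u; rewrite /sw /= !rK.
  rewrite (reindex_inj (inv_inj swK)) /=.
  apply: eq_big => [[x u]|[x u] _] /=; last by rewrite rK.
  apply/idP/idP => /andP[xA uB]; last exact: rAB.
  by have := rAB _ _ xA uB; rewrite !rK.
rewrite /avg -big_distrr /= swap_sum; congr (_ * _).
rewrite (eq_bigr (fun x => g x *+ #|B|)) => [|x _]; last by rewrite sumr_const.
by rewrite sumrMnl -(mulr_natl (\sum_(x in A) g x)) mulrA mulVf ?mul1r // pnatr_eq0 -lt0n.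
Qed.

End Average.

Lemma fmorph_avg (F K : numFieldType) (f : {rmorphism F -> K}) (T : finType)
    (A : {set T}) (g : T -> F) :
  f (avg A g) = avg A (f \o g).
Proof. by rewrite /avg rmorphM rmorph_sum fmorphV rmorph_nat. Qed.

Section RealAverage.
Variable R : realFieldType.

Lemma avg_ge0 (T : finType) (A : {set T}) (a : T -> R) :
  {in A, forall x, 0 <= a x} -> 0 <= avg A a.
Proof. by move=> a_ge0; rewrite mulr_ge0 ?invr_ge0 ?ler0n ?sumr_ge0. Qed.

Lemma ler_avg (T : finType) (A : {set T}) (a b : T -> R) :
  {in A, forall x, a x <= b x} -> avg A a <= avg A b.
Proof. by move=> le_ab; rewrite ler_wpM2l ?invr_ge0 ?ler0n ?ler_sum. Qed.

Lemma avg_sqr_le (T : finType) (A : {set T}) (a : T -> R) :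
  avg A a ^+ 2 <= avg A (fun x => a x ^+ 2).
Proof.
have [A0|A_gt0] := posnP #|A|; first by rewrite /avg A0 invr0 !mul0r expr0n.
set m := avg A a.
have var_ge0 : 0 <= avg A (fun x => (a x - m) ^+ 2).
  by apply: avg_ge0 => x _; exact: sqr_ge0.
have varE : avg A (fun x => (a x - m) ^+ 2) = avg A (fun x => a x ^+ 2) - m ^+ 2.
  rewrite (eq_avg (h := fun x => a x ^+ 2 - (2 * m * a x - m ^+ 2))); last first.
    by move=> x _; ring.
  by rewrite !avgB avgMl avg_const // -/m; ring.
by rewrite -subr_ge0 -varE.
Qed.

Lemma avg_exp2n_le (T : finType) (A : {set T}) (a : T -> R) (j : nat) :
  {in A, forall x, 0 <= a x} ->
  avg A a ^+ (2 ^ j) <= avg A (fun x => a x ^+ (2 ^ j)).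
Proof.
move=> a_ge0; elim: j => [|j IHj].
  by rewrite expn0 expr1 (eq_avg (h := a)) // => x _; rewrite expr1.
have pow_ge0 : {in A, forall x, 0 <= a x ^+ (2 ^ j)}.
  by move=> x /a_ge0; exact: exprn_ge0.
rewrite expnSr exprM.
apply: le_trans (_ : avg A (fun x => a x ^+ (2 ^ j)) ^+ 2 <= _).
  by rewrite lerXn2r ?nnegrE ?exprn_ge0 ?avg_ge0.
apply: le_trans (avg_sqr_le _ _) _.
by apply: ler_avg => x _; rewrite exprM.
Qed.

End RealAverage.

Section ComplexAverage.
Variable R : realType.
Local Notation normc := (@Normc.normc R).

Lemma normc_ge0 (z : R[i]) : 0 <= normc z.
Proof. exact: (@normr_ge0 R (Rcomplex R)). Qed.

Lemma normc_real (r : R) : normc (r%:C)%C = `|r|.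
Proof. by rewrite /= expr0n addr0 sqrtr_sqr. Qed.

Lemma sqr_normcE (z : R[i]) : ((normc z ^+ 2)%:C)%C = z * (z^*)%C.
Proof. by rewrite -sqr_normc normc_def rmorphXn; case: z. Qed.

Lemma normc_avg (T : finType) (A : {set T}) (g : T -> R[i]) :
  normc (avg A g) <= avg A (fun x => normc (g x)).
Proof.
rewrite /avg Normc.normcM Normc.normcV normcMn Normc.normc1.
by rewrite ler_wpM2l ?invr_ge0 ?ler0n // (@ler_norm_sum R (Rcomplex R)).
Qed.

Lemma cis_mul_conj (a b : R) : cis a * ((cis b)^*)%C = cis (a - b).
Proof.
rewrite /cis /= cosB sinB; apply/eqP; rewrite eq_complex /=.
by apply/andP; split; apply/eqP; ring.
Qed.

End ComplexAverage.

Lemma sum_subsetU1 (I : finType) (V : nmodType) (m : I) (J : {set I})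
    (F : {set I} -> V) :
  m \notin J ->
  \sum_(W : {set I} | W \subset m |: J) F W =
  \sum_(W : {set I} | W \subset J) (F W + F (m |: W)).
Proof.
move=> mJ.
have subJ (W : {set I}) : (W \subset J) = (W \subset m |: J) && (m \notin W).
  by rewrite -subsetD1 setU1K.
have U1K (W : {set I}) : ((m |: W) :\ m == W) = (m \notin W).
  by apply/eqP/idP => [<-|/setU1K //]; rewrite !inE eqxx.
rewrite big_split /= (bigID (fun W : {set I} => m \in W)) /= addrC; congr (_ + _).
  by apply: eq_bigl => W; rewrite subJ.
rewrite (reindex_onto (fun W => m |: W) (fun W => W :\ m)) /=; last first.
  by move=> W /andP[_ mW]; rewrite setD1K.
by apply: eq_bigl => W; rewrite subUset sub1set !setU11 andbT U1K -subJ.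
Qed.

Section Blocks.
Variables (R : realType) (n k : nat) (part : 'I_n -> 'I_k.+1).
Local Notation config := (config n).

Definition set_block (m : 'I_k) (x u : config) : config :=
  [ffun i => if inB part m i then u i else x i].

Lemma set_block_swapK (m : 'I_k) (x u : config) :
  set_block m (set_block m x u) (set_block m u x) = x.
Proof. by apply/ffunP => i; rewrite !ffunE; case: (inB part m i). Qed.

Definition mix_on (J V : {set 'I_k}) (x y0 y1 : config) : config :=
  [ffun i => match unlift ord0 (part i) with
             | None => x i
             | Some j => if j \in J then (if j \in V then y1 i else y0 i) else x i
             end].

Definition alpha_on (f : config -> R) (J : {set 'I_k}) (x y0 y1 : config) : R :=
  \sum_(V : {set 'I_k} | V \subset J) (-1) ^+ #|V| * f (mix_on J V x y0 y1).

Lemma alpha_on0 (f : config -> R) (x y0 y1 : config) : alpha_on f set0 x y0 y1 = f x.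
Proof.
rewrite /alpha_on (eq_bigl (pred1 set0)) => [|V]; last by rewrite subset0.
rewrite big_pred1_eq cards0 expr0 mul1r; congr (f _).
by apply/ffunP => i; rewrite ffunE; case: (unlift ord0 (part i)) => // j; rewrite inE.
Qed.

Lemma alpha_onT (f : config -> R) (x y0 y1 : config) :
  alpha_on f setT x y0 y1 = alpha part f x y0 y1.
Proof.
rewrite /alpha_on /alpha (eq_bigl xpredT) => [|V]; last by rewrite subsetT.
rewrite (reindex (fun v : {ffun 'I_k -> bool} => [set j | v j])) /=; last first.
  exists (fun V : {set 'I_k} => [ffun j => j \in V]) => [v _|V _].
    by apply/ffunP => j; rewrite ffunE inE.
  by apply/setP => j; rewrite inE ffunE.
apply: eq_bigr => v _; congr (_ * f _).
by apply/ffunP => i; rewrite !ffunE; case: (unlift ord0 (part i)) => // j; rewrite !inE.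
Qed.

Lemma mix_on_set_block (m : 'I_k) (J V : {set 'I_k}) (x y0 y1 u0 u1 : config) :
  m \notin J ->
  mix_on (m |: J) V x (set_block m y0 u0) (set_block m y1 u1)
  = mix_on J (V :\ m) (set_block m x (if m \in V then u1 else u0)) y0 y1.
Proof.
move=> mJ; apply/ffunP => i; rewrite !ffunE /inB.
case: unliftP => [j|] ->; last by rewrite (negbTE (neq_lift _ _)).
rewrite (inj_eq (@lift_inj _ ord0)) !inE.
by case: (eqVneq j m) => [->|] //=; rewrite (negbTE mJ); case: (m \in V).
Qed.

Lemma alpha_on_set_block (f : config -> R) (m : 'I_k) (J : {set 'I_k})
    (x y0 y1 u0 u1 : config) :
  m \notin J ->
  alpha_on f (m |: J) x (set_block m y0 u0) (set_block m y1 u1)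
  = alpha_on f J (set_block m x u0) y0 y1 - alpha_on f J (set_block m x u1) y0 y1.
Proof.
move=> mJ; rewrite /alpha_on sum_subsetU1 // -sumrB; apply: eq_bigr => W sWJ.
have mW : m \notin W by apply: contra mJ; apply: (subsetP sWJ).
have WD1 : W :\ m = W by apply/setDidPl; rewrite disjoint_sym disjoints1.
rewrite !mix_on_set_block // setU11 (negbTE mW) WD1 setU1K // cardsU1 mW.
by rewrite exprS mulN1r mulNr.
Qed.

End Blocks.

Section Decoupling.
Variables (R : realType) (n k : nat) (part : 'I_n -> 'I_k.+1).
Variables (f : config n -> R) (t : R) (T U : {set config n}).
Local Notation normc := (@Normc.normc R).
Local Notation set_block := (set_block part).

Hypothesis set_block_TU : forall m x u, x \in T -> u \in U ->
  (set_block m x u \in T) && (set_block m u x \in U).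
Hypothesis set_block_UU : forall m x u, x \in U -> u \in U ->
  (set_block m x u \in U) && (set_block m u x \in U).
Hypothesis U_gt0 : (#|U| > 0)%N.

Definition partial_charfun (J : {set 'I_k}) (y0 y1 : config n) : R[i] :=
  avg T (fun x => cis (t * alpha_on part f J x y0 y1)).

Definition partial_moment (J : {set 'I_k}) (e : nat) : R :=
  avg U (fun y0 => avg U (fun y1 => normc (partial_charfun J y0 y1) ^+ e)).

Lemma sqr_partial_charfun_le (m : 'I_k) (J : {set 'I_k}) (y0 y1 : config n) :
  m \notin J ->
  normc (partial_charfun J y0 y1) ^+ 2 <=
  avg U (fun u0 => avg U (fun u1 =>
    normc (partial_charfun (m |: J) (set_block m y0 u0) (set_block m y1 u1)))).
Proof.
move=> mJ.
pose h x := avg U (fun u => cis (t * alpha_on part f J (set_block m x u) y0 y1)).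
have resampleE : partial_charfun J y0 y1 = avg T h.
  by rewrite /h (avg_resample (fun x => cis (t * alpha_on part f J x y0 y1))
    (set_block_swapK part m) (set_block_TU m) U_gt0).
have sqr_hE x : ((normc (h x) ^+ 2)%:C)%C = avg U (fun u0 => avg U (fun u1 =>
    cis (t * alpha_on part f (m |: J) x (set_block m y0 u0) (set_block m y1 u1)))).
  rewrite sqr_normcE (fmorph_avg conjc) -avgMr; apply: eq_avg => u0 _.
  rewrite -avgMl; apply: eq_avg => u1 _ /=.
  by rewrite cis_mul_conj alpha_on_set_block // mulrBr.
have avg_sqr_hE : ((avg T (fun x => normc (h x) ^+ 2))%:C)%C =
    avg U (fun u0 => avg U (fun u1 =>
      partial_charfun (m |: J) (set_block m y0 u0) (set_block m y1 u1))).
  rewrite (fmorph_avg (real_complex R)) (eq_avg (fun x _ => sqr_hE x)).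
  by rewrite exchange_avg; apply: eq_avg => u0 _; rewrite exchange_avg.
rewrite resampleE.
apply: le_trans (_ : avg T (fun x => normc (h x)) ^+ 2 <= _).
  by rewrite lerXn2r ?nnegrE ?normc_ge0 ?avg_ge0 ?normc_avg // => x _; exact: normc_ge0.
apply: le_trans (avg_sqr_le _ _) _.
rewrite -[X in X <= _]ger0_norm ?avg_ge0 // => [|x _]; last exact: sqr_ge0.
rewrite -normc_real avg_sqr_hE.
apply: le_trans (normc_avg _ _) _.
by apply: ler_avg => u0 _; exact: normc_avg.
Qed.

Lemma partial_moment_step (m : 'I_k) (J : {set 'I_k}) (N : nat) :
  m \notin J -> partial_moment J (2 ^ N.+1) <= partial_moment (m |: J) (2 ^ N).
Proof.
move=> mJ; pose G y0 y1 := normc (partial_charfun (m |: J) y0 y1).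
have G_ge0 y0 y1 : 0 <= G y0 y1 by exact: normc_ge0.
have resampledE : avg U (fun y0 => avg U (fun y1 => avg U (fun u0 => avg U (fun u1 =>
      G (set_block m y0 u0) (set_block m y1 u1) ^+ (2 ^ N))))) =
    partial_moment (m |: J) (2 ^ N).
  have innerE y0 : avg U (fun y1 => avg U (fun u0 => avg U (fun u1 =>
        G (set_block m y0 u0) (set_block m y1 u1) ^+ (2 ^ N)))) =
      avg U (fun u0 => avg U (fun y1 => G (set_block m y0 u0) y1 ^+ (2 ^ N))).
    rewrite exchange_avg; apply: eq_avg => u0 _.
    exact: (avg_resample (fun y => G (set_block m y0 u0) y ^+ (2 ^ N))
             (set_block_swapK part m) (set_block_UU m) U_gt0).
  rewrite (eq_avg (fun y0 _ => innerE y0)).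
  exact: (avg_resample (fun y => avg U (fun y1 => G y y1 ^+ (2 ^ N)))
           (set_block_swapK part m) (set_block_UU m) U_gt0).
rewrite -resampledE; apply: ler_avg => y0 _; apply: ler_avg => y1 _.
rewrite expnSr mulnC exprM.
apply: le_trans (_ : avg U (fun u0 => avg U (fun u1 =>
    G (set_block m y0 u0) (set_block m y1 u1))) ^+ (2 ^ N) <= _).
  rewrite lerXn2r ?nnegrE ?exprn_ge0 ?normc_ge0 ?sqr_partial_charfun_le //.
  by apply: avg_ge0 => u0 _; exact: avg_ge0.
apply: le_trans (avg_exp2n_le _ _) _; first by move=> u0 _; exact: avg_ge0.
by apply: ler_avg => u0 _; exact: avg_exp2n_le.
Qed.

Lemma partial_moment_le_full (J : {set 'I_k}) :
  partial_moment J (2 ^ #|~: J|) <= partial_moment setT 1.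
Proof.
move CJc: #|~: J| => c; elim: c J CJc => [|c IHc] J CJc.
  by move/cards0_eq: CJc => CJ0; rewrite -(setCK J) CJ0 setC0.
have [m mCJ] : exists m, m \in ~: J by apply/card_gt0P; rewrite CJc.
apply: le_trans (partial_moment_step c (_ : m \notin J)) (IHc _ _).
  by rewrite -in_setC.
by move: CJc; rewrite setCU setIC -setDE (cardsD1 m) mCJ => -[].
Qed.

Theorem avg_cis_decoupling :
  normc (avg T (fun x => cis (t * f x))) ^+ (2 ^ k) <=
  avg U (fun y0 => avg U (fun y1 =>
    normc (avg T (fun x => cis (t * alpha part f x y0 y1))))).
Proof.
have := partial_moment_le_full set0.
rewrite setC0 cardsT card_ord /partial_moment /partial_charfun.
under eq_avg do under eq_avg do under eq_avg do rewrite alpha_on0.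
under [X in _ <= X]eq_avg do under eq_avg do under eq_avg do rewrite alpha_onT.
by rewrite !avg_const.
Qed.

End Decoupling.

Section Slices.
Variables (n k : nat) (part : 'I_n -> 'I_k.+1).
Local Notation config := (config n).
Local Notation inB := (inB part).
Local Notation set_block := (set_block part).

Definition slice (S : nat) : {set config} := [set x | ones x == S].

Definition fibre (S : nat) (z : {ffun 'I_k -> nat}) : {set config} :=
  [set x in slice S | Zof part x == z].

Lemma eq_ones_in (P : pred 'I_n) (x y : config) :
  {in P, x =1 y} -> ones_in P x = ones_in P y.
Proof.
by move=> e; apply: eq_card => i; rewrite !inE; case Pi: (P i); rewrite //= e.
Qed.

Lemma inB_inB (j m : 'I_k) (i : 'I_n) : inB j i -> inB m i = (j == m).
Proof. by rewrite /inB => /eqP ->; rewrite (inj_eq (@lift_inj _ ord0)) eq_sym. Qed.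

Lemma inA_inB (j : 'I_k) (i : 'I_n) : inA part i -> inB j i = false.
Proof. by rewrite /inA /inB => /eqP ->; exact/negbTE/neq_lift. Qed.

Lemma ones_in_set_block (j m : 'I_k) (x u : config) :
  ones_in (inB j) (set_block m x u) =
  if j == m then ones_in (inB m) u else ones_in (inB j) x.
Proof.
case: eqVneq => [->|jm]; apply: eq_ones_in => i Bi; rewrite ffunE.
  by rewrite [inB m i]Bi.
by rewrite (inB_inB m Bi) (negbTE jm).
Qed.

Lemma ones_set_block (m : 'I_k) (x u : config) :
  ones_in (inB m) u = ones_in (inB m) x -> ones (set_block m x u) = ones x.
Proof.
have onesE y : ones y = (ones_in (inB m) y + ones_in (predC (inB m)) y)%N.
  by rewrite /ones /ones_in -(cardsID [set i | inB m i]); congr (_ + _)%N;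
    apply: eq_card => i; rewrite !inE andbC.
move=> um; rewrite !onesE ones_in_set_block eqxx um; congr (_ + _)%N.
by apply: eq_ones_in => i /negbTE Bi; rewrite ffunE Bi.
Qed.

Lemma fibre_ones_in (S : nat) (z : {ffun 'I_k -> nat}) (m : 'I_k) (x : config) :
  x \in fibre S z -> ones_in (inB m) x = z m.
Proof. by rewrite inE => /andP[_ /eqP <-]; rewrite ffunE. Qed.

Lemma Yslice_ones_in (z : {ffun 'I_k -> nat}) (m : 'I_k) (y : config) :
  y \in Yslice part z -> ones_in (inB m) y = z m.
Proof. by rewrite inE => /andP[_ /forallP /(_ m) /eqP]. Qed.

Lemma set_block_fibre (S : nat) (z : {ffun 'I_k -> nat}) (m : 'I_k) (x u : config) :
  x \in fibre S z -> ones_in (inB m) u = z m -> set_block m x u \in fibre S z.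
Proof.
move=> xT um; have := xT; rewrite !inE => /andP[/eqP xS /eqP Zx].
rewrite ones_set_block ?xS ?eqxx ?um ?(fibre_ones_in m xT) //=.
apply/eqP/ffunP => j; rewrite ffunE ones_in_set_block.
by case: eqVneq => [->|_] //; rewrite -Zx ffunE.
Qed.

Lemma set_block_Yslice (z : {ffun 'I_k -> nat}) (m : 'I_k) (y u : config) :
  y \in Yslice part z -> ones_in (inB m) u = z m -> set_block m y u \in Yslice part z.
Proof.
move=> yU um; have := yU; rewrite !inE => /andP[/forallP yA /forallP yB].
apply/andP; split.
  apply/forallP => i; apply/implyP => Ai; rewrite ffunE (inA_inB m Ai).
  exact: (implyP (yA i) Ai).
apply/forallP => j; rewrite ones_in_set_block.
by case: (eqVneq j m) => [->|_]; [rewrite um | exact: yB].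
Qed.

Lemma set_block_fibre_Yslice (S : nat) (z : {ffun 'I_k -> nat}) (m : 'I_k)
    (x u : config) :
  x \in fibre S z -> u \in Yslice part z ->
  (set_block m x u \in fibre S z) && (set_block m u x \in Yslice part z).
Proof.
move=> xT uU; rewrite set_block_fibre ?(Yslice_ones_in m uU) //.
by rewrite set_block_Yslice ?(fibre_ones_in m xT).
Qed.

Lemma set_block_Yslice2 (z : {ffun 'I_k -> nat}) (m : 'I_k) (y u : config) :
  y \in Yslice part z -> u \in Yslice part z ->
  (set_block m y u \in Yslice part z) && (set_block m u y \in Yslice part z).
Proof.
move=> yU uU; rewrite set_block_Yslice ?(Yslice_ones_in m uU) //.
by rewrite set_block_Yslice ?(Yslice_ones_in m yU).
Qed.

Lemma Yslice_Zof_gt0 (x : config) : (#|Yslice part (Zof part x)| > 0)%N.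
Proof.
apply/card_gt0P; exists [ffun i => ~~ inA part i && x i]; rewrite inE; apply/andP; split.
  by apply/forallP => i; rewrite ffunE; case: (inA part i).
apply/forallP => j; rewrite ffunE; apply/eqP; apply: eq_ones_in => i Bi.
by rewrite ffunE; case Ai: (inA part i) => //; move: Bi; rewrite -topredE /= (inA_inB j Ai).
Qed.

End Slices.

Arguments slice {n} S.

Section ConditionedModel.
Variables (R : realType) (n k : nat) (part : 'I_n -> 'I_k.+1).
Variables (p : R) (S : nat) (f : config n -> R) (t : R).
Hypotheses (p_gt0 : 0 < p) (p_lt1 : p < 1).
Local Notation normc := (@Normc.normc R).
Local Notation slice := (@slice n).

Lemma cond_bern_uniform (x : config n) :
  cond_bern p S x = if x \in slice S then #|slice S|%:R^-1 else 0.
Proof.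
pose c := p ^+ S * (1 - p) ^+ (n - S).
have c_neq0 : c != 0 by rewrite mulf_neq0 // expf_neq0 // ?gt_eqF // subr_gt0.
have weightE y : bern_slice_weight p S y = if y \in slice S then c else 0.
  by rewrite /bern_slice_weight inE; case: eqP => // ->.
have totalE : \sum_(y : config n) bern_slice_weight p S y = #|slice S|%:R * c.
  by rewrite (eq_bigr _ (fun y _ => weightE y)) -big_mkcond sumr_const mulr_natl.
rewrite /cond_bern weightE totalE; case: ifP => _; last by rewrite mul0r.
by rewrite invfM mulrCA mulfV ?mulr1.
Qed.

Lemma sum_cond_bern (P : pred (config n)) (g : config n -> R) :
  \sum_(x | P x) cond_bern p S x * g x = #|slice S|%:R^-1 * \sum_(x in slice S | P x) g x.
Proof. exact/sum_mul_indicator/cond_bern_uniform. Qed.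

Lemma sum_cond_bernC (P : pred (config n)) (g : config n -> R[i]) :
  \sum_(x | P x) (cond_bern p S x)%:C%C * g x =
  #|slice S|%:R^-1 * \sum_(x in slice S | P x) g x.
Proof.
apply: sum_mul_indicator => x; rewrite cond_bern_uniform.
by case: ifP => _; rewrite ?rmorph0 // fmorphV rmorph_nat.
Qed.

Lemma charfun_avg : charfun p S f t = avg (slice S) (fun x => cis (t * f x)).
Proof.
rewrite /charfun (sum_cond_bernC xpredT) (eq_bigl (mem (slice S))) //.
by move=> x; rewrite andbT.
Qed.

Lemma condE_X_avg (z : {ffun 'I_k -> nat}) (y0 y1 : config n) :
  (#|slice S| > 0)%N ->
  condE_X part p S f t z y0 y1 =
  avg (fibre part S z) (fun x => cis (t * alpha part f x y0 y1)).
Proof.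
move=> slice_gt0.
have PZE : PZ part p S z = #|slice S|%:R^-1 * #|fibre part S z|%:R.
  rewrite /PZ (eq_bigr _ (fun x _ => esym (mulr1 (cond_bern p S x)))) sum_cond_bern.
  have -> : \sum_(x in slice S | Zof part x == z) 1 = \sum_(x in fibre part S z) 1 :> R.
    by apply: eq_bigl => x; rewrite !inE.
  by rewrite sumr_const.
rewrite /condE_X (sum_cond_bernC (fun x => Zof part x == z)) PZE.
rewrite rmorphM fmorphV !rmorph_nat /avg.
rewrite (eq_bigl (fun x => x \in fibre part S z)) => [|x]; last by rewrite !inE.
by rewrite invfM invrK mulrACA mulVf ?mul1r 1?mulrC // pnatr_eq0 -lt0n.
Qed.

Lemma sum_Ylaw (z : {ffun 'I_k -> nat}) (h : config n -> R) :
  \sum_(y : config n) Ylaw R part z y * h y = avg (Yslice part z) h.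
Proof.
rewrite (@sum_mul_indicator _ _ (Yslice part z) xpredT _ _ #|Yslice part z|%:R^-1) //.
by rewrite /avg (eq_bigl (fun y => y \in Yslice part z)) // => y; rewrite andbT.
Qed.

Lemma decoupled_bound_avg :
  decoupled_bound part p S f t =
  avg (slice S) (fun x => avg (Yslice part (Zof part x)) (fun y0 =>
    avg (Yslice part (Zof part x)) (fun y1 =>
      normc (condE_X part p S f t (Zof part x) y0 y1)))).
Proof.
have innerE (z : {ffun 'I_k -> nat}) (N : config n -> config n -> R) :
    \sum_y0 \sum_y1 Ylaw R part z y0 * Ylaw R part z y1 * N y0 y1 =
    avg (Yslice part z) (fun y0 => avg (Yslice part z) (N y0)).
  rewrite -sum_Ylaw; apply: eq_bigr => y0 _.
  by rewrite -sum_Ylaw big_distrr; apply: eq_bigr => y1 _; rewrite /= mulrA.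
rewrite /decoupled_bound; under eq_bigr do rewrite innerE.
rewrite (sum_cond_bern xpredT) /avg (eq_bigl (fun x => x \in slice S)) //.
by move=> x; rewrite andbT.
Qed.

End ConditionedModel.

Theorem lemma2p11 (R : realType) (n k : nat) (p : R) (S : nat)
    (hp0 : 0 < p) (hp1 : p < 1) (hS : (S <= n)%N)
    (part : 'I_n -> 'I_k.+1) (f : config n -> R) (t : R) :
  Normc.normc (charfun p S f t) ^+ (2 ^ k) <= decoupled_bound part p S f t.
Proof.
rewrite (charfun_avg _ _ _ hp0 hp1) (decoupled_bound_avg _ _ _ _ hp0 hp1).
rewrite -(avg_fibres (slice S) (Zof part) (fun x => cis (t * f x))).
apply: le_trans (_ : avg (slice S) (fun x => Normc.normc (avg (fibre part S (Zof part x))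
    (fun y => cis (t * f y)))) ^+ (2 ^ k) <= _).
  by rewrite lerXn2r ?nnegrE ?normc_ge0 ?avg_ge0 ?normc_avg // => x _; exact: normc_ge0.
apply: le_trans (avg_exp2n_le _ _) _ => [x _|]; first exact: normc_ge0.
apply: ler_avg => x xS.
have slice_gt0 : (#|@slice n S| > 0)%N by apply/card_gt0P; exists x.
under [X in _ <= X]eq_avg do under eq_avg do rewrite (condE_X_avg _ _ _ hp0 hp1) //.
apply: avg_cis_decoupling => [m y u|m y u|]; first exact: set_block_fibre_Yslice.
  exact: set_block_Yslice2.
exact: Yslice_Zof_gt0.
Qed.
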